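(* Let $\mathcal{H}_A\cong\mathbb{C}^{d_A}$, $\mathcal{H}_B\cong\mathbb{C}^{d_B}$ with $d_A,d_B\ge 2$ and computational bases $\{|a\rangle\}$, $\{|b\rangle\}$. There is no operator of the form $O=\sum_{\vec a\in\mathbb{Z}_{d_A}^3,\vec b\in\mathbb{Z}_{d_B}^3}O(\vec a,\vec b)\,|\vec a\rangle\langle\vec a|\otimes|\vec b\rangle\langle\vec b|$ (with complex coefficients $O(\vec a,\vec b)$) such that $(\Phi^3_A\otimes\Phi^3_B)(O)=M_{neg}$, where $M_{neg}=\tfrac12\big(W^A_{(1,2,3)}\otimes W^B_{(1,3,2)}+W^A_{(1,3,2)}\otimes W^B_{(1,2,3)}\big)$.
   Context: For $\mathcal{H}\cong\mathbb{C}^d$, $\Phi^3(X)=\int_{\mathrm{Haar}}dU\,U^{\otimes3}XU^{\dagger\otimes3}$ is the 3-fold Haar twirl on $\mathcal{H}^{\otimes3}$; $\Phi^3_A\otimes\Phi^3_B$ is independent twirling of the $A$ and $B$ parts of $(\mathcal{H}_A\otimes\mathcal{H}_B)^{\otimes3}\cong\mathcal{H}_A^{\otimes3}\otimes\mathcal{H}_B^{\otimes3}$. $W_\pi$ ($\pi\in S_3$) is the operator permuting tensor factors, $W_{(1,2,3)}|a_1,a_2,a_3\rangle=|a_2,a_3,a_1\rangle$ and $W_{(1,3,2)}=W_{(1,2,3)}^{-1}$; superscripts indicate the system. $|\vec a\rangle=|a_1\rangle|a_2\rangle|a_3\rangle$. *)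

(* The complex numbers are  R[i]  for an arbitrary  R : realType
   (every realType is a model of the real numbers, so R[i] is a model of C). *)
From HB Require Import structures.
From mathcomp Require Import all_boot all_order all_algebra spectral.
From mathcomp Require Import complex.
From mathcomp Require Import reals.

Set Implicit Arguments.
Unset Strict Implicit.
Unset Printing Implicit Defensive.

Import Order.TTheory GRing.Theory Num.Theory.
Local Open Scope ring_scope.

Section Haar.
Variable R : realType.
Local Notation C := (R[i]).

(* Polynomial functions of the matrix entries U_ij and their complex conjugates.
   These are exactly the functions that the Haar integral is applied to when
   computing a k-fold twirl. *)
Inductive polyfun (d : nat) : ('M[C]_d -> C) -> Prop :=
| pf_const (c : C) : polyfun (fun _ => c)
| pf_entry (i j : 'I_d) : polyfun (fun U => U i j)
| pf_conj (i j : 'I_d) : polyfun (fun U => (U i j)^*)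
| pf_add f g : polyfun f -> polyfun g -> polyfun (fun U => f U + g U)
| pf_mul f g : polyfun f -> polyfun g -> polyfun (fun U => f U * g U).

(* "f |-> \int_Haar dU f(U)" on U(d), restricted to polynomial functions:
   a normalised, positive, linear functional, depending only on the values on
   unitary matrices, and invariant under left and right translation by unitaries.
   (The Haar integral has these properties, and they determine it uniquely on
   polynomial functions.) *)
Record haar_integral (d : nat) (I : ('M[C]_d -> C) -> C) : Prop := {
  haar_add : forall f g, polyfun f -> polyfun g ->
    I (fun U => f U + g U) = I f + I g;
  haar_scale : forall (c : C) f, polyfun f -> I (fun U => c * f U) = c * I f;
  haar_on_unitary : forall f g, polyfun f -> polyfun g ->
    (forall U : 'M[C]_d, U \is unitarymx -> f U = g U) -> I f = I g;
  haar_normalized : I (fun _ => 1) = 1;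
  haar_positive : forall f, polyfun f ->
    (forall U : 'M[C]_d, U \is unitarymx -> 0 <= f U) -> 0 <= I f;
  haar_left_inv : forall (V : 'M[C]_d) f, V \is unitarymx -> polyfun f ->
    I (fun U => f (V *m U)) = I f;
  haar_right_inv : forall (V : 'M[C]_d) f, V \is unitarymx -> polyfun f ->
    I (fun U => f (U *m V)) = I f
}.

(* Computational basis of H^{\otimes 3}: |a> = |a_1>|a_2>|a_3>, a in Z_d^3. *)
Definition tri (d : nat) := {ffun 'I_3 -> 'I_d}.

(* Operators on (H_A^{\otimes 3}) \otimes (H_B^{\otimes 3}), as matrices
   indexed by the computational basis pairs (a, b). *)
Definition opAB (dA dB : nat) := (tri dA * tri dB)%type -> (tri dA * tri dB)%type -> C.

(* Matrix elements <x| U^{\otimes 3} |y> = U_{x1 y1} U_{x2 y2} U_{x3 y3}. *)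
Definition tens3 (d : nat) (U : 'M[C]_d) (x y : tri d) : C :=
  \prod_(i < 3) U (x i) (y i).

(* (Phi^3_A \otimes Phi^3_B)(X)
     = \int dU \int dV (U^{(x)3} (x) V^{(x)3}) X (U^{(x)3} (x) V^{(x)3})^dagger,
   computed entrywise. *)
Definition twirlAB (dA dB : nat) (IA : ('M[C]_dA -> C) -> C)
    (IB : ('M[C]_dB -> C) -> C) (X : opAB dA dB) : opAB dA dB :=
  fun x y => IA (fun U => IB (fun V =>
    \sum_(x' : tri dA * tri dB) \sum_(y' : tri dA * tri dB)
       (tens3 U x.1 x'.1 * tens3 V x.2 x'.2) * X x' y'
       * (tens3 U y.1 y'.1 * tens3 V y.2 y'.2)^*)).

(* W_pi for pi in S_3: W_pi |y_1,y_2,y_3> = |y_{pi 1}, y_{pi 2}, y_{pi 3}>,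
   i.e. <x| W_pi |y> = [x = y o pi].  With pi = ordS (0->1->2->0) this is
   W_{(1,2,3)} |a1,a2,a3> = |a2,a3,a1>, and with pi = ord_pred it is
   W_{(1,3,2)} |a1,a2,a3> = |a3,a1,a2> = W_{(1,2,3)}^{-1}. *)
Definition Wperm (d : nat) (pi : 'I_3 -> 'I_3) (x y : tri d) : C :=
  (x == [ffun i => y (pi i)])%:R.

Definition W123 (d : nat) := Wperm (d := d) (@ordS 3).
Definition W132 (d : nat) := Wperm (d := d) (@ord_pred 3).

Definition Mneg (dA dB : nat) : opAB dA dB :=
  fun x y => 2^-1 * (W123 x.1 y.1 * W132 x.2 y.2 + W132 x.1 y.1 * W123 x.2 y.2).

Definition diag_op (dA dB : nat) (c : tri dA * tri dB -> C) : opAB dA dB :=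
  fun x y => if x == y then c x else 0.

End Haar.

From HB Require Import structures.
From mathcomp Require Import all_boot all_order all_algebra spectral.
From mathcomp Require Import complex.
From mathcomp Require Import reals.
From mathcomp Require Import ring.
From Stdlib Require Import FunctionalExtensionality.
Import GRing.Theory Num.Theory.
Local Open Scope ring_scope.
Set Implicit Arguments.
Unset Strict Implicit.

(* Since U^{(x)3} commutes with the permutation operators, the diagonal
   matrix elements <z|(U^{(x)3})^dagger W_pi U^{(x)3}|z> = <z|W_pi|z> are the
   same for pi = (1,2,3) and pi^-1 = (1,3,2) whenever U is unitary.  A diagonal
   operator O only sees such diagonal elements, so pairing the A factor of
   (Phi^3_A (x) Phi^3_B)(O) with W_(123) - W_(132) gives 0 for every matrix
   entry of the B factor.  For M_neg the same pairing at the B entry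
   (e o (1,2,3), e), with e a non-constant triple, is
   tr(W_(132) (W_(123) - W_(132))) / 2 = (d_A^3 - d_A) / 2 <> 0.
   Only the linearity of the integrals and the fact that they depend only on
   the values at unitaries are used. *)

Section Twirl.
Variable R : realType.
Local Notation C := (R[i]).

Lemma polyfun_ext d (f g : 'M[C]_d -> C) :
  f =1 g -> polyfun f -> polyfun g.
Proof. by move=> /functional_extensionality ->. Qed.

Lemma polyfun_sum d (T : Type) (r : seq T) (F : T -> 'M[C]_d -> C) :
  (forall t, polyfun (F t)) -> polyfun (fun U => \sum_(t <- r) F t U).
Proof.
move=> pfF; elim: r => [|t r IHr].
  by apply: (polyfun_ext (f := fun _ => 0)) => [U|];
    rewrite ?big_nil //; apply: pf_const.
by apply: (polyfun_ext (f := fun U => F t U + \sum_(t <- r) F t U)) => [U|];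
  rewrite ?big_cons //; apply: pf_add.
Qed.

Lemma polyfun_prod d (T : Type) (r : seq T) (F : T -> 'M[C]_d -> C) :
  (forall t, polyfun (F t)) -> polyfun (fun U => \prod_(t <- r) F t U).
Proof.
move=> pfF; elim: r => [|t r IHr].
  by apply: (polyfun_ext (f := fun _ => 1)) => [U|];
    rewrite ?big_nil //; apply: pf_const.
by apply: (polyfun_ext (f := fun U => F t U * \prod_(t <- r) F t U)) => [U|];
  rewrite ?big_cons //; apply: pf_mul.
Qed.

Lemma polyfun_tens3_conj d (x x' y y' : tri d) :
  polyfun (fun U : 'M[C]_d => tens3 U x x' * (tens3 U y y')^*).
Proof.
apply: pf_mul; first by apply: polyfun_prod => i; apply: pf_entry.
apply: (polyfun_ext (f := fun U => \prod_(i < 3) (U (y i) (y' i))^*)).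
  by move=> U; rewrite /tens3 rmorph_prod.
by apply: polyfun_prod => i; apply: pf_conj.
Qed.

Section HaarLinearity.
Variables (d : nat) (I : ('M[C]_d -> C) -> C).
Hypothesis haarI : haar_integral I.

Lemma haar_const0 : I (fun _ => 0) = 0.
Proof.
by have := haar_scale haarI 0 (pf_const _ 1); rewrite mul0r => ->; rewrite mul0r.
Qed.

Lemma haar_sum (T : Type) (r : seq T) (k : T -> C) (F : T -> 'M[C]_d -> C) :
  (forall t, polyfun (F t)) ->
  I (fun U => \sum_(t <- r) k t * F t U) = \sum_(t <- r) k t * I (F t).
Proof.
have pf_scale t (f : 'M[C]_d -> C) : polyfun f -> polyfun (fun U => k t * f U).
  by move=> pf; apply: pf_mul => //; apply: pf_const.
move=> pfF; elim: r => [|t r IHr].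
  rewrite big_nil -[RHS]haar_const0; congr (I _).
  by apply: functional_extensionality => U; rewrite big_nil.
rewrite big_cons -IHr -(haar_scale haarI) // -(haar_add haarI) //.
- by congr (I _); apply: functional_extensionality => U; rewrite big_cons.
- exact: pf_scale.
- by apply: polyfun_sum => t'; apply: pf_scale.
Qed.

End HaarLinearity.

Lemma twirlAB_entry dA dB (IA : ('M[C]_dA -> C) -> C) (IB : ('M[C]_dB -> C) -> C)
    (X : opAB R dA dB) x y :
  haar_integral IA -> haar_integral IB ->
  twirlAB IA IB X x y =
  \sum_x' \sum_y' X x' y' *
    (IA (fun U => tens3 U x.1 x'.1 * (tens3 U y.1 y'.1)^*) *
     IB (fun V => tens3 V x.2 x'.2 * (tens3 V y.2 y'.2)^*)).
Proof.
move=> haarA haarB; rewrite /twirlAB pair_bigA /=.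
pose a (p : (tri dA * tri dB) * (tri dA * tri dB)) (U : 'M[C]_dA) :=
  tens3 U x.1 p.1.1 * (tens3 U y.1 p.2.1)^*.
pose b (p : (tri dA * tri dB) * (tri dA * tri dB)) (V : 'M[C]_dB) :=
  tens3 V x.2 p.1.2 * (tens3 V y.2 p.2.2)^*.
have inner U : IB (fun V => \sum_x' \sum_y'
      (tens3 U x.1 x'.1 * tens3 V x.2 x'.2) * X x' y'
      * (tens3 U y.1 y'.1 * tens3 V y.2 y'.2)^*) =
    \sum_p (X p.1 p.2 * IB (b p)) * a p U.
  rewrite -(eq_bigr _ (fun p _ => mulrAC _ _ _)) -haar_sum //; last first.
    by move=> p; apply: polyfun_tens3_conj.
  congr (IB _); apply: functional_extensionality => V; rewrite pair_bigA /=.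
  by apply: eq_bigr => p _; rewrite /a /b rmorphM /=; ring.
rewrite (functional_extensionality _ _ inner) haar_sum //; last first.
  by move=> p; apply: polyfun_tens3_conj.
by apply: eq_bigr => p _; rewrite mulrAC -mulrA.
Qed.

Lemma sum_eq_natr_mul (T : finType) (a : T) (g : T -> C) :
  \sum_y (y == a)%:R * g y = g a.
Proof.
rewrite (bigD1 a) //= eqxx mul1r big1 ?addr0 // => y /negbTE ->.
by rewrite mul0r.
Qed.

Lemma unitarymx_col_dot d (U : 'M[C]_d) j k :
  U \is unitarymx -> \sum_a U a j * (U a k)^* = (j == k)%:R.
Proof.
rewrite -trmx_unitary => /unitarymxP/(congr1 (fun M : 'M[C]_d => M j k)).
by rewrite !mxE => <-; apply: eq_bigr => a _; rewrite !mxE.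
Qed.

Lemma sum_tens3_conj_perm d (U : 'M[C]_d) (pi : 'I_3 -> 'I_3) (z : tri d) :
  U \is unitarymx -> injective pi ->
  \sum_(x : tri d) tens3 U x z * (tens3 U [ffun i => x (pi i)] z)^* =
  \prod_i (z (pi i) == z i)%:R.
Proof.
move=> unitaryU pi_inj.
have perm_inj : injective (fun x : tri d => [ffun i => x (pi i)]).
  move=> x1 x2 /ffunP eq12; apply/ffunP => j.
  by have := eq12 (invF pi_inj j); rewrite !ffunE f_invF.
transitivity (\sum_(w : tri d) \prod_i (U (w i) (z (pi i)) * (U (w i) (z i))^*)).
  rewrite [RHS](reindex_inj perm_inj); apply: eq_bigr => x _ /=.
  rewrite /tens3 rmorph_prod (reindex_inj pi_inj) -big_split /=.
  by apply: eq_bigr => i _; rewrite !ffunE.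
under [RHS]eq_bigr => i _ do rewrite -(unitarymx_col_dot _ _ unitaryU).
by rewrite bigA_distr_bigA.
Qed.

Lemma Wperm_transpose_sum d (pi : 'I_3 -> 'I_3) (F : tri d -> tri d -> C) :
  \sum_x \sum_y Wperm R pi y x * F x y = \sum_x F x [ffun i => x (pi i)].
Proof. by apply: eq_bigr => x _; rewrite /Wperm sum_eq_natr_mul. Qed.

Lemma sum_Wdiff_tens3_conj d (U : 'M[C]_d) (z : tri d) :
  U \is unitarymx ->
  \sum_x \sum_y (W123 R y x - W132 R y x) * (tens3 U x z * (tens3 U y z)^*) = 0.
Proof.
move=> unitaryU.
under eq_bigr => x _ do under eq_bigr => y _ do rewrite mulrBl.
under eq_bigr => x _ do rewrite sumrB.
rewrite sumrB !Wperm_transpose_sum.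
rewrite !sum_tens3_conj_perm //; [|exact: ord_pred_inj|exact: ordS_inj].
rewrite [X in _ - X](reindex_inj (@ordS_inj 3)) /=.
by apply/eqP; rewrite subr_eq0; apply/eqP/eq_bigr => i _; rewrite ordSK eq_sym.
Qed.

Lemma haar_Wdiff_moment d (I : ('M[C]_d -> C) -> C) (z : tri d) :
  haar_integral I ->
  \sum_x \sum_y (W123 R y x - W132 R y x) *
    I (fun U => tens3 U x z * (tens3 U y z)^*) = 0.
Proof.
move=> haarI; rewrite pair_bigA /= -haar_sum //; last first.
  by move=> p; apply: polyfun_tens3_conj.
rewrite -[RHS](haar_const0 haarI); apply: (haar_on_unitary haarI).
- apply: polyfun_sum => p.
  by apply: pf_mul; [apply: pf_const | apply: polyfun_tens3_conj].
- exact: pf_const.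
- by move=> U unitaryU; rewrite -[RHS](sum_Wdiff_tens3_conj z unitaryU) pair_bigA.
Qed.

Lemma sum_diag_op dA dB (c : tri dA * tri dB -> C) (G : opAB R dA dB) :
  \sum_x \sum_y diag_op c x y * G x y = \sum_z c z * G z z.
Proof.
apply: eq_bigr => x _; rewrite (bigD1 x) //= /diag_op eqxx big1 ?addr0 // => y.
by rewrite eq_sym => /negbTE ->; rewrite mul0r.
Qed.

Lemma twirlAB_diag_Wdiff_pair dA dB (IA : ('M[C]_dA -> C) -> C)
    (IB : ('M[C]_dB -> C) -> C) (c : tri dA * tri dB -> C) (x2 y2 : tri dB) :
  haar_integral IA -> haar_integral IB ->
  \sum_x1 \sum_y1 twirlAB IA IB (diag_op c) (x1, x2) (y1, y2) *
    (W123 R y1 x1 - W132 R y1 x1) = 0.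
Proof.
move=> haarA haarB.
under eq_bigr => x1 _ do under eq_bigr => y1 _ do
  rewrite twirlAB_entry // sum_diag_op mulr_suml.
under eq_bigr => x1 _ do rewrite exchange_big.
rewrite exchange_big big1 // => z _ /=.
transitivity (c z * IB (fun V => tens3 V x2 z.2 * (tens3 V y2 z.2)^*) *
  \sum_x1 \sum_y1 (W123 R y1 x1 - W132 R y1 x1) *
    IA (fun U => tens3 U x1 z.1 * (tens3 U y1 z.1)^*)).
  rewrite mulr_sumr; apply: eq_bigr => x1 _.
  by rewrite mulr_sumr; apply: eq_bigr => y1 _; ring.
by rewrite haar_Wdiff_moment // mulr0.
Qed.

Lemma W132_transpose d (x y : tri d) : W132 R x y = W123 R y x.
Proof.
rewrite /W132 /W123 /Wperm; congr ((nat_of_bool _)%:R); apply/idP/idP => /eqP ->.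
  by apply/eqP/ffunP => i; rewrite !ffunE ordSK.
by apply/eqP/ffunP => i; rewrite !ffunE ord_predK.
Qed.

Lemma Mneg_Wdiff_pair dA dB (x2 y2 : tri dB) :
  \sum_(x1 : tri dA) \sum_(y1 : tri dA)
    Mneg R (x1, x2) (y1, y2) * (W123 R y1 x1 - W132 R y1 x1) =
  2^-1 * ((\sum_(x1 : tri dA) \sum_y1 W123 R x1 y1 * (W123 R y1 x1 - W132 R y1 x1))
            * W132 R x2 y2 +
          (\sum_(x1 : tri dA) \sum_y1 W132 R x1 y1 * (W123 R y1 x1 - W132 R y1 x1))
            * W123 R x2 y2).
Proof.
rewrite !mulr_suml -big_split mulr_sumr; apply: eq_bigr => x1 _.
rewrite !mulr_suml -big_split mulr_sumr; apply: eq_bigr => y1 _.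
by rewrite /Mneg /=; ring.
Qed.

Lemma sum_W132_Wdiff d :
  \sum_(x : tri d) \sum_y W132 R x y * (W123 R y x - W132 R y x) =
  \sum_(x : tri d) ([ffun i => x (ordS i)] != [ffun i => x (ord_pred i)] : nat)%:R.
Proof.
under eq_bigr => x _ do under eq_bigr => y _ do rewrite W132_transpose.
rewrite Wperm_transpose_sum; apply: eq_bigr => x _.
by rewrite /W123 /W132 /Wperm eqxx; case: eqP; rewrite ?subrr ?subr0.
Qed.

Lemma exists_tri_rot_neq d : (1 < d)%N ->
  exists e : tri d, [ffun i => e (ordS i)] != [ffun i => e (ord_pred i)].
Proof.
move=> d_gt1.
exists [ffun i : 'I_3 => if i == ord0 then Ordinal d_gt1 else Ordinal (ltnW d_gt1)].
by apply/eqP => /ffunP/(_ ord_max)/(congr1 val); rewrite !ffunE.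
Qed.

Lemma sum_W132_Wdiff_neq0 d : (1 < d)%N ->
  \sum_(x : tri d) \sum_y W132 R x y * (W123 R y x - W132 R y x) != 0.
Proof.
move=> /exists_tri_rot_neq[e rot_e]; rewrite sum_W132_Wdiff.
apply/eqP => /(psumr_eq0P (fun x _ => ler0n _ _))/(_ e isT)/eqP.
by rewrite rot_e oner_eq0.
Qed.

End Twirl.

Theorem proposition2 (R : realType) (dA dB : nat) (hdA : (2 <= dA)%N) (hdB : (2 <= dB)%N)
    (IA : ('M[R[i]]_dA -> R[i]) -> R[i]) (IB : ('M[R[i]]_dB -> R[i]) -> R[i]) :
  haar_integral IA -> haar_integral IB ->
  ~ exists c : tri dA * tri dB -> R[i],
      forall x y, twirlAB IA IB (diag_op c) x y = @Mneg R dA dB x y.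
Proof.
move=> haarA haarB [c twirl_eq_Mneg].
have [e rot_e] := exists_tri_rot_neq hdB.
pose f : tri dB := [ffun i => e (ordS i)].
have W123_fe : W123 R f e = 1 by rewrite /W123 /Wperm eqxx.
have W132_fe : W132 R f e = 0 by rewrite /W132 /Wperm (negbTE rot_e).
have := twirlAB_diag_Wdiff_pair c f e haarA haarB.
under eq_bigr => x1 _ do under eq_bigr => y1 _ do rewrite twirl_eq_Mneg.
rewrite Mneg_Wdiff_pair W123_fe W132_fe mulr0 add0r mulr1.
by apply/eqP; rewrite mulf_neq0 ?invr_neq0 ?pnatr_eq0 ?(sum_W132_Wdiff_neq0 R hdA).
Qed.
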